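(* A subgrid tensor $\tau$ whose deviatoric part has the form $$\tau^d = \alpha_1^0 S + \frac{\alpha_2^0}{|S|}(S^2)^d + \frac{\alpha_3^0}{|S|}(\Omega^2)^d + \frac{\alpha_4^0}{|S|^2}(\Omega S\Omega)^d + \frac{\alpha_5^0}{|S|}[S,\Omega] + \frac{\alpha_6^0}{|S|^2}[S^2,\Omega] + \frac{\alpha_7^0}{|S|^3}[\Omega S\Omega,\Omega],$$ where $|S|=\sqrt{\operatorname{tr}(S^2)}$ and $\alpha_1^0,\dots,\alpha_7^0$ are arbitrary scalar functions of $$v_1=\frac{\operatorname{tr}(S^3)}{|S|^3},\quad v_2=\frac{\operatorname{tr}(S^2\Omega^2)}{|S|^4},\quad v_3=\frac{\operatorname{tr}(\Omega^2)}{|S|^2},\quad v_4=\frac{\operatorname{tr}(S\Omega^2)}{|S|^3},\quad v_5=\frac{\operatorname{tr}(S^2\Omega^2S\Omega)}{|S|^6},$$ is invariant under the symmetry groups $G_t$, $Gal$, $SO(3)$, $G_p$ and $G_s$ of the Navier–Stokes equations.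
   Context: Consider the filtered incompressible Navier–Stokes equations on $\mathbb R^3$: $\partial_t u + \nabla\cdot(u\otimes u) + \frac1\rho \nabla p - 2\nu\,\nabla\cdot S + \nabla\cdot\tau = 0$, $\nabla\cdot u=0$, where $u(t,x)\in\mathbb R^3$ is the filtered velocity, $p$ the filtered pressure, $\nu>0$ the kinematic viscosity, $\rho>0$ the density, $S=\frac12(\nabla u+\nabla u^T)$ the (filtered) strain-rate tensor, $\Omega=\frac12(\nabla u-\nabla u^T)$ the (filtered) vorticity tensor, and $\tau$ the subgrid tensor, which is modelled as a tensor-valued function of $(S,\Omega)$. The following groups act on $(t,x,u,p)$: time translations $G_t$: $(t,x,u,p)\mapsto(t+\epsilon,x,u,p)$, $\epsilon\in\mathbb R$; the generalized Galilean group $Gal$: $(t,x,u,p)\mapsto(t,x+\alpha(t),u+\dot\alpha(t),p-\rho\,\ddot\alpha(t)\cdot x)$, $\alpha\in C^2(\mathbb R,\mathbb R^3)$; rotations $SO(3)$: $(t,x,u,p)\mapsto(t,Rx,Ru,p)$, $RR^T=I$, $\det R=1$; pressure translations $G_p$: $(t,x,u,p)\mapsto(t,x,u,p+\xi(t))$, $\xi\in C^0(\mathbb R,\mathbb R)$; scalings $G_s$: $(t,x,u,p)\mapsto(e^{2\epsilon}t,e^{\epsilon}x,e^{-\epsilon}u,e^{-2\epsilon}p)$, $\epsilon\in\mathbb R$. A model $\tau$ is called invariant under such a group $G$ if every element of $G$, acting on $(t,x,u,p)$, is a symmetry of the filtered equations with that model (maps solutions to solutions). For a $3\times 3$ matrix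 $Q$, $Q^d=Q-\frac13\operatorname{tr}(Q)\,I$ denotes its deviatoric part, and $[P,Q]=PQ-QP$. *)

From HB Require Import structures.
From mathcomp Require Import all_boot all_order all_algebra.
From mathcomp Require Import all_classical all_reals all_analysis.
Set Implicit Arguments. Unset Strict Implicit. Unset Printing Implicit Defensive.
Import Order.TTheory GRing.Theory Num.Theory.
Import numFieldNormedType.Exports.
Local Open Scope ring_scope.

Section FilteredNS.
Variable R : realType.

Notation vec := 'cV[R]_3.
Notation mat := 'M[R]_3.

Definition evec (j : 'I_3) : vec := delta_mx j 0.

Definition dotv (a b : vec) : R := \sum_(i < 3) a i 0 * b i 0.

Definition vfield := R -> vec -> vec.
Definition sfield := R -> vec -> R.

Definition gradu (u : vfield) (t : R) (x : vec) : mat :=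
  \matrix_(i < 3, j < 3) 'D_(evec j) (fun y => u t y i 0) x.

Definition Sof (u : vfield) t x : mat := 2^-1 *: (gradu u t x + (gradu u t x)^T).
Definition Omof (u : vfield) t x : mat := 2^-1 *: (gradu u t x - (gradu u t x)^T).

Definition dev (Q : mat) : mat := Q - (\tr Q / 3%:R) *: 1%:M.
Definition comm (P Q : mat) : mat := P *m Q - Q *m P.
Definition normS (S : mat) : R := Num.sqrt (\tr (S *m S)).

(** the subgrid model of the statement; alpha_k are arbitrary scalar functions
   of (v1,...,v5).  Division by 0 follows MathComp's convention x/0 = 0. *)
Definition model (a1 a2 a3 a4 a5 a6 a7 : R -> R -> R -> R -> R -> R)
  (S W : mat) : mat :=
  let n := normS S in
  let v1 := \tr (S *m S *m S) / n ^+ 3 in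
  let v2 := \tr (S *m S *m W *m W) / n ^+ 4 in
  let v3 := \tr (W *m W) / n ^+ 2 in
  let v4 := \tr (S *m W *m W) / n ^+ 3 in
  let v5 := \tr (S *m S *m W *m W *m S *m W) / n ^+ 6 in
  let A k := k v1 v2 v3 v4 v5 in
  A a1 *: S
  + (A a2 / n) *: dev (S *m S)
  + (A a3 / n) *: dev (W *m W)
  + (A a4 / n ^+ 2) *: dev (W *m S *m W)
  + (A a5 / n) *: comm S W
  + (A a6 / n ^+ 2) *: comm (S *m S) W
  + (A a7 / n ^+ 3) *: comm (W *m S *m W) W.

Definition is_solution (nu rho : R) (tau : mat -> mat -> mat)
  (u : vfield) (p : sfield) : Prop :=
  (forall t x, differentiable (fun z : R * vec => u z.1 z.2) (t, x)) /\
  (forall t x (i j : 'I_3), differentiable (fun y => gradu u t y i j) x) /\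
  (forall t x, differentiable (p t) x) /\
  (forall t x (i j : 'I_3),
     differentiable (fun y => tau (Sof u t y) (Omof u t y) i j) x) /\
  (forall t x, \tr (gradu u t x) = 0) /\
  (forall t x (i : 'I_3),
     'D_1 (fun s => u s x i 0) t
     + \sum_(j < 3) 'D_(evec j) (fun y => u t y i 0 * u t y j 0) x
     + rho^-1 * 'D_(evec i) (p t) x
     - 2%:R * nu * \sum_(j < 3) 'D_(evec j) (fun y => Sof u t y i j) x
     + \sum_(j < 3) 'D_(evec j) (fun y => tau (Sof u t y) (Omof u t y) i j) x
     = 0).

Definition act_time (eps : R) (u : vfield) (p : sfield) : vfield * sfield :=
  (fun t x => u (t - eps) x, fun t x => p (t - eps) x).

(* generalized Galilean: (t,x,u,p) |-> (t, x+alpha t, u + alpha', p - rho alpha''.x) *)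
Definition act_gal (rho : R) (alpha : R -> vec) (u : vfield) (p : sfield)
  : vfield * sfield :=
  (fun t x => u t (x - alpha t) + (derive1 alpha) t,
   fun t x => p t (x - alpha t) - rho * dotv ((derive1 (derive1 alpha)) t) (x - alpha t)).

Definition act_rot (Q : mat) (u : vfield) (p : sfield) : vfield * sfield :=
  (fun t x => Q *m u t (Q^T *m x), fun t x => p t (Q^T *m x)).

Definition act_press (xi : R -> R) (u : vfield) (p : sfield) : vfield * sfield :=
  (u, fun t x => p t x + xi t).

(* scalings: (t,x,u,p) |-> (e^{2eps}t, e^eps x, e^{-eps} u, e^{-2eps} p) *)
Definition act_scal (eps : R) (u : vfield) (p : sfield) : vfield * sfield :=
  (fun t x => expR (- eps) *: u (expR (- (2%:R * eps)) * t) (expR (- eps) *: x),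
   fun t x => expR (- (2%:R * eps)) * p (expR (- (2%:R * eps)) * t) (expR (- eps) *: x)).

Definition C2 (alpha : R -> vec) : Prop :=
  (forall t, derivable alpha t 1) /\ (forall t, derivable (derive1 alpha) t 1) /\
  continuous (derive1 (derive1 alpha)).

Definition preserves nu rho tau (g : vfield -> sfield -> vfield * sfield) : Prop :=
  forall u p, is_solution nu rho tau u p ->
    is_solution nu rho tau (g u p).1 (g u p).2.

Definition invariant_Gt nu rho tau : Prop :=
  forall eps : R, preserves nu rho tau (act_time eps).
Definition invariant_Gal nu rho tau : Prop :=
  forall alpha : R -> vec, C2 alpha -> preserves nu rho tau (act_gal rho alpha).
Definition invariant_SO3 nu rho tau : Prop :=
  forall Q : mat, Q *m Q^T = 1%:M -> \det Q = 1 -> preserves nu rho tau (act_rot Q).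
Definition invariant_Gp nu rho tau : Prop :=
  forall xi : R -> R, continuous xi -> preserves nu rho tau (act_press xi).
Definition invariant_Gs nu rho tau : Prop :=
  forall eps : R, preserves nu rho tau (act_scal eps).

End FilteredNS.

From HB Require Import structures.
From mathcomp Require Import all_boot all_order all_algebra.
From mathcomp Require Import all_classical all_reals all_analysis.
From mathcomp Require Import ring.
Import Order.TTheory GRing.Theory Num.Theory.
Import numFieldNormedType.Exports.
Local Open Scope ring_scope.
Set Implicit Arguments. Unset Strict Implicit. Unset Printing Implicit Defensive.

(* Time translations, rotations and scalings are all instances of one action,
   u'(t,x) = M u(s t + c, M^T x), p'(t,x) = s p(s t + c, M^T x) with M^T M = s I.
   It conjugates the velocity gradient, grad u' = M (grad u) M^T, so every term
   of the momentum equation is multiplied by the same s M as soon as the subgrid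
   model is equivariant, tau(M S M^T, M W M^T) = M tau(S, W) M^T.  The model is:
   each invariant v_i is homogeneous of degree 0 under this conjugation and each
   tensor term, divided by its power of |S|, of degree 1.  Under a Galilean change
   of frame S and Omega are only translated, the term -alpha'.grad u produced by
   the time derivative is cancelled by the convection term (using div u = 0), and
   alpha'' by the pressure correction.  Pressure translations leave grad p alone. *)

Section Calculus.
Variable R : realType.
Notation vec := 'cV[R]_3.

Lemma derive_comp_affine (U V W : normedModType R) (f : V -> W) (g : U -> V)
    x v y w :
  (forall h : R, g (h *: v + x) = h *: w + y) ->
  'D_v (fun z => f (g z)) x = 'D_w f y.
Proof.
move=> gE; have gx : g x = y by have := gE 0; rewrite !scale0r !add0r.
rewrite /derive.
suff -> : (fun h : R => h^-1 *: (((fun z => f (g z)) \o shift x) (h *: v) - f (g x)))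
  = (fun h => h^-1 *: ((f \o shift y) (h *: w) - f y)) by [].
by apply: funext => h /=; rewrite gE gx.
Qed.

Lemma derive_translate (V W : normedModType R) (f : V -> W) (c x v : V) :
  'D_v (fun y => f (y - c)) x = 'D_v f (x - c).
Proof.
apply: (@derive_comp_affine _ _ _ f (fun y => y - c) x v (x - c) v) => h.
by rewrite addrA.
Qed.

Lemma differentiable_translate (V W : normedModType R) (f : V -> W) (c x : V) :
  differentiable f (x - c) -> differentiable (fun y => f (y - c)) x.
Proof.
move=> df; have dg : differentiable (fun y : V => y - c) x.
  by apply: differentiableB => //; apply: differentiable_cst.
exact: (differentiable_comp dg df).
Qed.

Lemma derive_chain (U V W : normedModType R) (f : V -> W) (g : U -> V) x v :
  differentiable g x -> differentiable f (g x) ->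
  'D_v (fun z => f (g z)) x = 'D_('D_v g x) f (g x).
Proof.
move=> dg df; rewrite (deriveE v (differentiable_comp dg df)) diff_comp //=.
by rewrite -!deriveE.
Qed.

Lemma derive_pair (U V W : normedModType R) (f : U -> V) (g : U -> W) x v :
  differentiable f x -> differentiable g x ->
  'D_v (fun y => (f y, g y)) x = ('D_v f x, 'D_v g x).
Proof.
move=> df dg; rewrite deriveE; last exact: differentiable_pair.
by rewrite diff_pair // -!deriveE.
Qed.

Lemma derive_mulmx_arg (W : normedModType R) m n (A : 'M[R]_(m, n))
    (f : 'cV[R]_m -> W) x v :
  'D_v (fun y => f (A *m y)) x = 'D_(A *m v) f (A *m x).
Proof.
apply: (@derive_comp_affine _ _ _ f (fun y => A *m y) x v (A *m x) (A *m v)) => h.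
by rewrite mulmxDr scalemxAr.
Qed.

Lemma derive_addr_cst (V W : normedModType R) (f : V -> W) (c : W) x v :
  'D_v (fun z => f z + c) x = 'D_v f x.
Proof.
rewrite /derive.
suff -> : (fun h : R => h^-1 *: (((fun z => f z + c) \o shift x) (h *: v) - (f x + c)))
  = (fun h => h^-1 *: ((f \o shift x) (h *: v) - f x)) by [].
by apply: funext => h /=; rewrite opprD addrACA subrr addr0.
Qed.

Lemma derive_scale_dir (W : normedModType R) (f : R -> W) r c :
  differentiable f r -> 'D_c f r = c *: 'D_1 f r.
Proof.
move=> df; rewrite !deriveE //.
by rewrite -[in LHS](mulr1 c) -[c * 1]/(c *: (1 : R)) linearZ.
Qed.

Lemma differentiable_affine_arg (W : normedModType R) (f : R -> W) (a c t : R) :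
  differentiable f (a * t + c) -> differentiable (fun r => f (a * r + c)) t.
Proof.
move=> df; have dg : differentiable (fun r : R => a * r + c) t.
  apply: differentiableD; last exact: differentiable_cst.
  by apply: differentiableM => //; apply: differentiable_cst.
exact: (differentiable_comp dg df).
Qed.

Lemma derive1_affine_arg (W : normedModType R) (f : R -> W) (a c t : R) :
  differentiable f (a * t + c) ->
  'D_1 (fun r => f (a * r + c)) t = a *: 'D_1 f (a * t + c).
Proof.
move=> df; rewrite -derive_scale_dir //.
apply: (@derive_comp_affine _ _ _ f (fun r => a * r + c) t 1 (a * t + c) a) => h.
by rewrite -[h *: a]/(h * a) -[h *: 1]/(h * 1) mulr1 mulrDr addrA mulrC.
Qed.

Lemma differentiable_sumf (V : normedModType R) n (f : 'I_n -> V -> R) x :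
  (forall k, differentiable (f k) x) -> differentiable (fun y => \sum_k f k y) x.
Proof. by move=> df; rewrite -fct_sumE; apply: differentiable_sum. Qed.

Lemma derive_sumf (V : normedModType R) n (f : 'I_n -> V -> R) x v :
  (forall k, differentiable (f k) x) ->
  'D_v (fun y => \sum_k f k y) x = \sum_k 'D_v (f k) x.
Proof.
by move=> df; rewrite -fct_sumE derive_sum // => k; apply: diff_derivable.
Qed.

Lemma differentiable_cmul (V : normedModType R) (c : R) (f : V -> R) x :
  differentiable f x -> differentiable (fun y => c * f y) x.
Proof. by move=> df; apply: differentiableM => //; apply: differentiable_cst. Qed.

Lemma derive_cmul (V : normedModType R) (c : R) (f : V -> R) x v :
  differentiable f x -> 'D_v (fun y => c * f y) x = c * 'D_v f x.
Proof.
move=> df; have -> : (fun y => c * f y) = c \*o f by [].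
by rewrite deriveMl //; apply: diff_derivable.
Qed.

Lemma derive_mulf (V : normedModType R) (f g : V -> R) x v :
  differentiable f x -> differentiable g x ->
  'D_v (fun y => f y * g y) x = f x * 'D_v g x + g x * 'D_v f x.
Proof.
move=> df dg; have -> : (fun y => f y * g y) = f * g by [].
by rewrite deriveM //; apply: diff_derivable.
Qed.

Lemma derive_addf (V : normedModType R) (f g : V -> R) x v :
  differentiable f x -> differentiable g x ->
  'D_v (fun y => f y + g y) x = 'D_v f x + 'D_v g x.
Proof.
move=> df dg; have -> : (fun y => f y + g y) = f + g by [].
by rewrite deriveD //; apply: diff_derivable.
Qed.

Lemma derive_subf (V : normedModType R) (f g : V -> R) x v :
  differentiable f x -> differentiable g x ->
  'D_v (fun y => f y - g y) x = 'D_v f x - 'D_v g x.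
Proof.
move=> df dg; have -> : (fun y => f y - g y) = f - g by [].
by rewrite deriveB //; apply: diff_derivable.
Qed.

Lemma differentiable_entry (V : normedModType R) m n (f : V -> 'M[R]_(m, n)) x i j :
  differentiable f x -> differentiable (fun y => f y i j) x.
Proof. by move=> df; apply: (differentiable_comp df (differentiable_coord _ i j)). Qed.

Lemma derive_entry (V : normedModType R) m n (f : V -> 'M[R]_(m, n)) x v i j :
  derivable f x v -> 'D_v (fun y => f y i j) x = 'D_v f x i j.
Proof. by move=> df; rewrite (derive_mx df) mxE. Qed.

Lemma derive_coord m n (x v : 'M[R]_(m, n)) i j :
  'D_v (fun z : 'M[R]_(m, n) => z i j) x = v i j.
Proof. by rewrite (@derive_entry _ _ _ id) ?derive_id //; apply: derivable_id. Qed.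

Lemma differentiable_mulmx (V : normedModType R) m n (A : 'M[R]_(m, n))
    (f : V -> 'cV[R]_n) x :
  differentiable f x -> differentiable (fun y => A *m f y) x.
Proof.
move=> df.
have -> : (fun y => A *m f y) = \sum_k (fun y => f y k 0 *: col k A).
  apply: funext => y; rewrite fct_sumE; apply/matrixP => i j.
  rewrite !mxE summxE; apply: eq_bigr => k _.
  by rewrite !mxE (ord1 j) mulrC.
apply: differentiable_sum => k; apply: differentiableZl.
exact: differentiable_entry.
Qed.

Lemma evecE (A : 'M[R]_3) i j : (A *m evec R j) i 0 = A i j.
Proof. by rewrite /evec -colE mxE. Qed.

Lemma vec_sum_evec (w : vec) : w = \sum_j w j 0 *: evec R j.
Proof.
apply/matrixP => i k; rewrite (ord1 k) summxE (bigD1 i) //= big1 => [|j ji].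
  by rewrite !mxE !eqxx mulr1 addr0.
by rewrite !mxE [i == j]eq_sym (negbTE ji) mulr0.
Qed.

Lemma derive_evec_expand (f : vec -> R) x w : differentiable f x ->
  'D_w f x = \sum_j w j 0 * 'D_(evec R j) f x.
Proof.
move=> df; rewrite deriveE // {1}(vec_sum_evec w) linear_sum; apply: eq_bigr => j _.
by rewrite linearZ deriveE.
Qed.

Lemma dotv_evec (w : vec) i : dotv w (evec R i) = w i 0.
Proof.
rewrite /dotv (bigD1 i) //= big1 => [|j ji].
  by rewrite !mxE !eqxx mulr1 addr0.
by rewrite !mxE (negbTE ji) mulr0.
Qed.

Lemma differentiable_dotv (w x : vec) : differentiable (dotv w) x.
Proof.
apply: differentiable_sumf => k; apply: differentiable_cmul.
exact: differentiable_coord.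
Qed.

Lemma derive_dotv (w x v : vec) : 'D_v (dotv w) x = dotv w v.
Proof.
rewrite /dotv derive_sumf => [|k]; last first.
  by apply: differentiable_cmul; apply: differentiable_coord.
apply: eq_bigr => k _; rewrite derive_cmul ?derive_coord //.
exact: differentiable_coord.
Qed.

Lemma differentiable_fst (U V : normedModType R) (z : U * V) :
  differentiable (fun q : U * V => q.1) z.
Proof.
have lin : linear (fun q : U * V => q.1) by [].
pose fL : {linear (U * V)%type -> U} :=
  HB.pack (fun q : U * V => q.1) (GRing.isLinear.Build _ _ _ _ _ lin).
rewrite (_ : (fun q => q.1) = fL) //.
by apply: linear_differentiable => q; apply: cvg_fst.
Qed.

Lemma differentiable_snd (U V : normedModType R) (z : U * V) :
  differentiable (fun q : U * V => q.2) z.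
Proof.
have lin : linear (fun q : U * V => q.2) by [].
pose fL : {linear (U * V)%type -> V} :=
  HB.pack (fun q : U * V => q.2) (GRing.isLinear.Build _ _ _ _ _ lin).
rewrite (_ : (fun q => q.2) = fL) //.
by apply: linear_differentiable => q; apply: cvg_snd.
Qed.

Section Slices.
Variables (U V W : normedModType R) (F : U * V -> W).

Lemma differentiable_sliceL t y :
  differentiable F (t, y) -> differentiable (fun s => F (s, y)) t.
Proof.
move=> dF; have dp : differentiable (fun s : U => (s, y)) t.
  by apply: differentiable_pair => //; apply: differentiable_cst.
exact: (differentiable_comp dp dF).
Qed.

Lemma differentiable_sliceR t y :
  differentiable F (t, y) -> differentiable (fun z => F (t, z)) y.
Proof.
move=> dF; have dp : differentiable (fun z : V => (t, z)) y.
  by apply: differentiable_pair => //; apply: differentiable_cst.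
exact: (differentiable_comp dp dF).
Qed.

Lemma derive_sliceL t y v : 'D_v (fun s => F (s, y)) t = 'D_((v, 0)) F (t, y).
Proof.
apply: (@derive_comp_affine _ _ _ F (fun s => (s, y)) t v (t, y) (v, 0)) => h.
by rewrite -[LHS]/(h *: v + t, y) -[RHS]/(h *: v + t, h *: 0 + y) scaler0 add0r.
Qed.

Lemma derive_sliceR t y w : 'D_w (fun z => F (t, z)) y = 'D_((0, w)) F (t, y).
Proof.
apply: (@derive_comp_affine _ _ _ F (fun z => (t, z)) y w (t, y) (0, w)) => h.
by rewrite -[RHS]/(h *: 0 + t, h *: w + y) scaler0 add0r.
Qed.

End Slices.

Lemma derive_moving_frame (V W : normedModType R) (F : R * V -> W) (a : R -> V)
    t x :
  differentiable a t -> differentiable F (t, x - a t) ->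
  'D_1 (fun r => F (r, x - a r)) t
  = 'D_1 (fun r => F (r, x - a t)) t - 'D_('D_1 a t) (fun y => F (t, y)) (x - a t).
Proof.
move=> da dF.
have dx : differentiable (fun r => x - a r) t.
  by apply: differentiableB => //; apply: differentiable_cst.
have Dx : 'D_1 (fun r => x - a r) t = - 'D_1 a t.
  have -> : (fun r => x - a r) = cst x - a by [].
  by rewrite deriveB ?derive_cst ?sub0r //; apply: diff_derivable => //;
    apply: differentiable_cst.
rewrite (derive_chain (g := fun r => (r, x - a r))) /=; first last.
- exact: dF.
- exact: differentiable_pair.
rewrite derive_pair // derive_id Dx derive_sliceL derive_sliceR deriveE //.
have -> : ((1, - 'D_1 a t) : R * V) = (1, 0) - (0, 'D_1 a t).
  by rewrite -[RHS]/(1 - 0, 0 - 'D_1 a t) subr0 sub0r.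
by rewrite linearB -!deriveE.
Qed.

End Calculus.

Section ConformalAlgebra.
Variable R : realType.
Notation mat := 'M[R]_3.
Variables (M : mat) (s : R).
Hypothesis MtM : M^T *m M = s%:M.
Hypothesis s_gt0 : 0 < s.

Local Notation C X := (M *m X *m M^T).

Lemma conformal_mulmx_tr : M *m M^T = s%:M.
Proof.
have s0 : s != 0 by rewrite gt_eqF.
have inv : (s^-1 *: M^T) *m M = 1%:M.
  by rewrite -scalemxAl MtM scale_scalar_mx mulVf.
by rewrite -[M^T](scalerKV s0) -scalemxAr (mulmx1C inv) scalemx1.
Qed.

Lemma conj_mul (X Y : mat) : C X *m C Y = s *: C (X *m Y).
Proof.
by rewrite !mulmxA -[M *m X *m M^T *m M]mulmxA MtM mul_mx_scalar -!scalemxAl.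
Qed.

Lemma mxtrace_conj (X : mat) : \tr (C X) = s * \tr X.
Proof. by rewrite mxtrace_mulC mulmxA MtM mul_scalar_mx mxtraceZ. Qed.

Lemma conjZ a (X : mat) : C (a *: X) = a *: C X.
Proof. by rewrite -scalemxAr -scalemxAl. Qed.

Lemma conjD (X Y : mat) : C (X + Y) = C X + C Y.
Proof. by rewrite mulmxDr mulmxDl. Qed.

Lemma conjB (X Y : mat) : C (X - Y) = C X - C Y.
Proof. by rewrite mulmxBr mulmxBl. Qed.

Lemma devZ a (X : mat) : dev (a *: X) = a *: dev X.
Proof. by rewrite /dev mxtraceZ scalerBr scalerA mulrA. Qed.

Lemma dev_conj (X : mat) : dev (C X) = C (dev X).
Proof.
rewrite /dev conjB conjZ mulmx1 conformal_mulmx_tr mxtrace_conj -[s%:M]scalemx1.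
by rewrite scalerA [s * _]mulrC mulrAC.
Qed.

Lemma commZl a (X Y : mat) : comm (a *: X) Y = a *: comm X Y.
Proof. by rewrite /comm -scalemxAl -scalemxAr scalerBr. Qed.

Lemma comm_conj (X Y : mat) : comm (C X) (C Y) = s *: C (comm X Y).
Proof. by rewrite /comm !conj_mul conjB scalerBr. Qed.

Lemma normS_conj (X : mat) : normS (C X) = s * normS X.
Proof.
rewrite /normS conj_mul mxtraceZ mxtrace_conj mulrA sqrtrM ?mulr_ge0 ?ltW //.
by rewrite -expr2 sqrtr_sqr ger0_norm ?ltW.
Qed.

Lemma conj_homog k (x n : R) : s ^+ k * x / (s * n) ^+ k = x / n ^+ k.
Proof. by rewrite exprMn invfM mulrACA mulfV ?mul1r // expf_neq0 // gt_eqF. Qed.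

(* [n] may vanish, so [n^-1] is kept as an atom: the identities rely on [x / 0 = 0]. *)
Lemma conj_coef1 (a n : R) : a / (s * n) * s = a / n.
Proof. by rewrite invfM; set m := n^-1; field; rewrite gt_eqF. Qed.

Lemma conj_coef2 (a n : R) : a / (s * n) ^+ 2 * s * s = a / n ^+ 2.
Proof. by rewrite exprMn invfM; set m := (n ^+ 2)^-1; field; rewrite gt_eqF. Qed.

Lemma conj_coef3 (a n : R) : a / (s * n) ^+ 3 * s * s * s = a / n ^+ 3.
Proof. by rewrite exprMn invfM; set m := (n ^+ 3)^-1; field; rewrite gt_eqF. Qed.

Ltac conj_words := repeat (rewrite conj_mul || rewrite -scalemxAl).

Lemma model_conj a1 a2 a3 a4 a5 a6 a7 (S W : mat) :
  model a1 a2 a3 a4 a5 a6 a7 (C S) (C W) = C (model a1 a2 a3 a4 a5 a6 a7 S W).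
Proof.
rewrite /model /= !conjD !conjZ normS_conj.
have t1 : \tr (C S *m C S *m C S) = s ^+ 3 * \tr (S *m S *m S).
  by conj_words; rewrite !mxtraceZ mxtrace_conj; ring.
have t2 : \tr (C S *m C S *m C W *m C W) = s ^+ 4 * \tr (S *m S *m W *m W).
  by conj_words; rewrite !mxtraceZ mxtrace_conj; ring.
have t3 : \tr (C W *m C W) = s ^+ 2 * \tr (W *m W).
  by conj_words; rewrite !mxtraceZ mxtrace_conj; ring.
have t4 : \tr (C S *m C W *m C W) = s ^+ 3 * \tr (S *m W *m W).
  by conj_words; rewrite !mxtraceZ mxtrace_conj; ring.
have t5 : \tr (C S *m C S *m C W *m C W *m C S *m C W)
          = s ^+ 6 * \tr (S *m S *m W *m W *m S *m W).
  by conj_words; rewrite !mxtraceZ mxtrace_conj; ring.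
rewrite t1 t2 t3 t4 t5 !conj_homog; conj_words.
rewrite !devZ !commZl !dev_conj !comm_conj !scalerA.
by rewrite !conj_coef1 !conj_coef2 !conj_coef3.
Qed.

End ConformalAlgebra.

Section NavierStokesResidual.
Variable R : realType.
Notation vec := 'cV[R]_3.
Notation mat := 'M[R]_3.

Definition divr (F : vec -> mat) (x : vec) (i : 'I_3) : R :=
  \sum_j 'D_(evec R j) (fun y => F y i j) x.

(* Verbatim the left-hand side of the i-th momentum equation of [is_solution],
   so that the two are convertible. *)
Definition ns_residual (nu rho : R) (tau : mat -> mat -> mat)
    (u : vfield R) (p : sfield R) t x i : R :=
  'D_1 (fun s => u s x i 0) t
  + \sum_j 'D_(evec R j) (fun y => u t y i 0 * u t y j 0) x
  + rho^-1 * 'D_(evec R i) (p t) x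
  - 2%:R * nu * divr (Sof u t) x i
  + divr (fun y => tau (Sof u t y) (Omof u t y)) x i.

Lemma dyad_entry (a : vec) k l : (a *m a^T) k l = a k 0 * a l 0.
Proof. by rewrite mxE big_ord1 mxE. Qed.

Lemma convection_divr (f : vec -> vec) x i :
  \sum_j 'D_(evec R j) (fun y => f y i 0 * f y j 0) x
  = divr (fun y => f y *m (f y)^T) x i.
Proof.
apply: eq_bigr => j _; congr ('D_ _ _ _).
by apply: funext => y; rewrite dyad_entry.
Qed.

Lemma divr_translate (F : vec -> mat) (c x : vec) i :
  divr (fun y => F (y - c)) x i = divr F (x - c) i.
Proof. by apply: eq_bigr => j _; rewrite (derive_translate (fun y => F y i j)). Qed.

Lemma differentiable_Sof (u : vfield R) t x i j :
  (forall k l, differentiable (fun y => gradu u t y k l) x) ->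
  differentiable (fun y => Sof u t y i j) x.
Proof.
move=> dgrad.
rewrite (_ : (fun y => _) = fun y => 2^-1 * (gradu u t y i j + gradu u t y j i)).
  by apply: differentiable_cmul; apply: differentiableD.
by apply: funext => y; rewrite !mxE.
Qed.

End NavierStokesResidual.

Section ConformalChange.
Variable R : realType.
Notation vec := 'cV[R]_3.
Notation mat := 'M[R]_3.
Variables (M : mat) (s c : R).

Local Notation C X := (M *m X *m M^T).

Definition conf_vel (u : vfield R) : vfield R :=
  fun t x => M *m u (s * t + c) (M^T *m x).
Definition conf_pres (p : sfield R) : sfield R :=
  fun t x => s * p (s * t + c) (M^T *m x).
Definition act_conf (u : vfield R) (p : sfield R) : vfield R * sfield R :=
  (conf_vel u, conf_pres p).

Lemma conj_entry (X : mat) i j :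
  (C X) i j = \sum_k M i k * \sum_l M j l * X k l.
Proof.
rewrite mxE; under eq_bigr do rewrite !mxE big_distrl /=.
rewrite exchange_big; apply: eq_bigr => k _; rewrite big_distrr.
by apply: eq_bigr => l _ /=; rewrite -mulrA [X k l * _]mulrC.
Qed.

Lemma differentiable_precomp (W : normedModType R) (f : vec -> W) x :
  differentiable f (M^T *m x) -> differentiable (fun y => f (M^T *m y)) x.
Proof.
move=> df; have dA : differentiable (fun y : vec => M^T *m y) x.
  exact: (@differentiable_mulmx _ _ _ _ _ (fun y => y)).
exact: (differentiable_comp dA df).
Qed.

Lemma differentiable_conj_entry (F : vec -> mat) x i j :
  (forall k l, differentiable (fun y => F y k l) (M^T *m x)) ->
  differentiable (fun y => (C (F (M^T *m y))) i j) x.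
Proof.
move=> dF; under eq_fun do rewrite conj_entry.
apply: differentiable_sumf => k; apply: differentiable_cmul.
apply: differentiable_sumf => l; apply: differentiable_cmul.
exact: (differentiable_precomp (dF k l)).
Qed.

Lemma derive_evec_precomp (f : vec -> R) x j : differentiable f (M^T *m x) ->
  'D_(evec R j) (fun y => f (M^T *m y)) x
  = \sum_m M j m * 'D_(evec R m) f (M^T *m x).
Proof.
move=> df; rewrite derive_mulmx_arg derive_evec_expand //.
by apply: eq_bigr => m _; rewrite evecE mxE.
Qed.

Lemma derive_conf_time (u : vfield R) t x i :
  (forall k, differentiable (fun r => u r (M^T *m x) k 0) (s * t + c)) ->
  'D_1 (fun r => conf_vel u r x i 0) t
  = s * \sum_k M i k * 'D_1 (fun r => u r (M^T *m x) k 0) (s * t + c).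
Proof.
move=> du; rewrite /conf_vel; under eq_fun do rewrite mxE.
rewrite derive_sumf => [|k]; last first.
  by apply: differentiable_cmul; exact: (differentiable_affine_arg (du k)).
rewrite big_distrr; apply: eq_bigr => k _ /=.
rewrite derive_cmul; last exact: (differentiable_affine_arg (du k)).
by rewrite (derive1_affine_arg (du k)) mulrCA.
Qed.

Lemma gradu_conf (u : vfield R) t x :
  (forall k, differentiable (fun y => u (s * t + c) y k 0) (M^T *m x)) ->
  gradu (conf_vel u) t x = C (gradu u (s * t + c) (M^T *m x)).
Proof.
move=> du; apply/matrixP => i j; rewrite conj_entry mxE /conf_vel.
under eq_fun do rewrite mxE.
rewrite derive_sumf => [|k]; last first.
  by apply: differentiable_cmul; exact: (differentiable_precomp (du k)).
apply: eq_bigr => k _; rewrite derive_cmul; last exact: (differentiable_precomp (du k)).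
rewrite (derive_evec_precomp _ (du k)); congr (_ * _).
by apply: eq_bigr => l _; rewrite mxE.
Qed.

Lemma derive_conf_pres (p : sfield R) t x i :
  differentiable (p (s * t + c)) (M^T *m x) ->
  'D_(evec R i) (conf_pres p t) x
  = s * \sum_k M i k * 'D_(evec R k) (p (s * t + c)) (M^T *m x).
Proof.
move=> dp; rewrite derive_cmul; last exact: (differentiable_precomp dp).
by rewrite (derive_evec_precomp _ dp).
Qed.

Hypothesis MtM : M^T *m M = s%:M.

Lemma conformal_contract (g : 'I_3 -> R) l :
  \sum_j M j l * \sum_m M j m * g m = s * g l.
Proof.
under eq_bigr do rewrite big_distrr.
rewrite exchange_big (eq_bigr (fun m => (M^T *m M) l m * g m)) => [|m _]; last first.
  by rewrite mxE big_distrl; apply: eq_bigr => j _ /=; rewrite mxE mulrA.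
rewrite MtM (bigD1 l) //= big1 => [|m ml]; first by rewrite mxE eqxx mulr1n addr0.
by rewrite mxE eq_sym (negbTE ml) mulr0n mul0r.
Qed.

Lemma divr_conj (F : vec -> mat) x i :
  (forall k l, differentiable (fun y => F y k l) (M^T *m x)) ->
  divr (fun y => C (F (M^T *m y))) x i
  = s * \sum_k M i k * divr F (M^T *m x) k.
Proof.
move=> dF; rewrite /divr.
have dFc k l : differentiable (fun y => F (M^T *m y) k l) x.
  exact: (differentiable_precomp (dF k l)).
transitivity (\sum_j \sum_k M i k * \sum_l M j l *
    \sum_m M j m * 'D_(evec R m) (fun z => F z k l) (M^T *m x)).
  apply: eq_bigr => j _; under eq_fun do rewrite conj_entry.
  rewrite derive_sumf => [|k]; last first.
    apply: differentiable_cmul; apply: differentiable_sumf => l.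
    exact: differentiable_cmul.
  apply: eq_bigr => k _; rewrite derive_cmul; last first.
    by apply: differentiable_sumf => l; apply: differentiable_cmul.
  rewrite derive_sumf => [|l]; last exact: differentiable_cmul.
  congr (_ * _); apply: eq_bigr => l _.
  by rewrite derive_cmul // (derive_evec_precomp _ (dF k l)).
rewrite exchange_big big_distrr; apply: eq_bigr => k _ /=.
rewrite -big_distrr /= [s * _]mulrCA; congr (_ * _).
rewrite exchange_big big_distrr; apply: eq_bigr => l _ /=.
exact: conformal_contract.
Qed.

End ConformalChange.

Section VelocityRegularity.
Variable R : realType.
Notation vec := 'cV[R]_3.
Variable u : vfield R.
Hypothesis du : forall t x, differentiable (fun z : R * vec => u z.1 z.2) (t, x).

Lemma differentiable_vel_space t x k : differentiable (fun y => u t y k 0) x.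
Proof.
apply: (@differentiable_entry _ _ _ _ (u t)).
exact: (differentiable_sliceR (F := fun z : R * vec => u z.1 z.2) (du t x)).
Qed.

Lemma differentiable_vel_time t x k : differentiable (fun r => u r x k 0) t.
Proof.
apply: (@differentiable_entry _ _ _ _ (fun r => u r x)).
exact: (differentiable_sliceL (F := fun z : R * vec => u z.1 z.2) (du t x)).
Qed.

End VelocityRegularity.

Section ConformalSolution.
Variable R : realType.
Notation vec := 'cV[R]_3.
Notation mat := 'M[R]_3.
Variables (nu rho : R) (tau : mat -> mat -> mat) (M : mat) (s c : R).
Hypothesis MtM : M^T *m M = s%:M.

Local Notation C X := (M *m X *m M^T).

Hypothesis tau_conj : forall S W, tau (C S) (C W) = C (tau S W).

Variables (u : vfield R) (p : sfield R).
Hypothesis du : forall t x, differentiable (fun z : R * vec => u z.1 z.2) (t, x).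
Hypothesis dgrad : forall t x i j, differentiable (fun y => gradu u t y i j) x.
Hypothesis dp : forall t x, differentiable (p t) x.
Hypothesis dtau :
  forall t x i j, differentiable (fun y => tau (Sof u t y) (Omof u t y) i j) x.

Local Notation u' := (conf_vel M s c u).

Lemma trmx_conj (X : mat) : (C X)^T = C X^T.
Proof. by rewrite !trmx_mul trmxK mulmxA. Qed.

Lemma Sof_conf t x : Sof u' t x = C (Sof u (s * t + c) (M^T *m x)).
Proof.
rewrite /Sof gradu_conf ?trmx_conj -?conjD ?conjZ // => k.
exact: differentiable_vel_space.
Qed.

Lemma Omof_conf t x : Omof u' t x = C (Omof u (s * t + c) (M^T *m x)).
Proof.
rewrite /Omof gradu_conf ?trmx_conj -?conjB ?conjZ // => k.
exact: differentiable_vel_space.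
Qed.

Lemma tau_conf t x :
  tau (Sof u' t x) (Omof u' t x)
  = C (tau (Sof u (s * t + c) (M^T *m x)) (Omof u (s * t + c) (M^T *m x))).
Proof. by rewrite Sof_conf Omof_conf tau_conj. Qed.

Lemma convection_conf t x i :
  \sum_j 'D_(evec R j) (fun y => u' t y i 0 * u' t y j 0) x
  = s * \sum_k M i k *
      \sum_j 'D_(evec R j) (fun y => u (s * t + c) y k 0 * u (s * t + c) y j 0)
        (M^T *m x).
Proof.
set a := u (s * t + c); rewrite convection_divr.
rewrite (_ : (fun y => _) = fun y => C (a (M^T *m y) *m (a (M^T *m y))^T)).
  rewrite (divr_conj MtM (F := fun z => a z *m (a z)^T)) => [|k l]; last first.
    by rewrite (_ : (fun y => _) = fun y => a y k 0 * a y l 0);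
      [apply: differentiableM; apply: differentiable_vel_space
      | apply: funext => y; rewrite dyad_entry].
  by congr (_ * _); apply: eq_bigr => k _; rewrite convection_divr.
by apply: funext => y; rewrite /conf_vel trmx_mul !mulmxA.
Qed.

Lemma ns_residual_conf t x i :
  ns_residual nu rho tau u' (conf_pres M s c p) t x i
  = s * \sum_k M i k * ns_residual nu rho tau u p (s * t + c) (M^T *m x) k.
Proof.
have visc : divr (Sof u' t) x i
    = s * \sum_k M i k * divr (Sof u (s * t + c)) (M^T *m x) k.
  rewrite (_ : Sof u' t = fun y => C (Sof u (s * t + c) (M^T *m y))).
    rewrite (divr_conj MtM (F := Sof u (s * t + c))) // => k l.
    exact: differentiable_Sof.
  by apply: funext => y; rewrite Sof_conf.
have sgs : divr (fun y => tau (Sof u' t y) (Omof u' t y)) x i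
    = s * \sum_k M i k * divr (fun y => tau (Sof u (s * t + c) y)
                                           (Omof u (s * t + c) y)) (M^T *m x) k.
  rewrite (_ : (fun y => _) = fun y => C (tau (Sof u (s * t + c) (M^T *m y))
                                             (Omof u (s * t + c) (M^T *m y)))).
    by rewrite (divr_conj MtM
      (F := fun z => tau (Sof u (s * t + c) z) (Omof u (s * t + c) z))).
  by apply: funext => y; rewrite tau_conf.
rewrite /ns_residual derive_conf_time => [|k]; last exact: differentiable_vel_time.
rewrite convection_conf derive_conf_pres // visc sgs.
under [in RHS]eq_bigr do rewrite !mulrDr mulrN [_ * (rho^-1 * _)]mulrCA
  [_ * (_ * nu * _)]mulrCA.
rewrite !big_split sumrN /= -!mulr_sumr; ring.
Qed.

End ConformalSolution.

Section Galilean.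
Variable R : realType.
Notation vec := 'cV[R]_3.
Notation mat := 'M[R]_3.
Variables (nu rho : R) (tau : mat -> mat -> mat).
Variables (alpha : R -> vec) (u : vfield R) (p : sfield R).

Local Notation a1 := (derive1 alpha).
Local Notation ug := (act_gal rho alpha u p).1.
Local Notation pg := (act_gal rho alpha u p).2.

Lemma gal_vel_entry t k :
  (fun y => ug t y k 0) = fun y => u t (y - alpha t) k 0 + a1 t k 0.
Proof. by apply: funext => y; rewrite /= mxE. Qed.

Lemma derive_gal_space t x v k :
  'D_v (fun y => ug t y k 0) x = 'D_v (fun y => u t y k 0) (x - alpha t).
Proof.
by rewrite gal_vel_entry derive_addr_cst (derive_translate (fun y => u t y k 0)).
Qed.

Lemma gradu_gal t x : gradu ug t x = gradu u t (x - alpha t).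
Proof. by apply/matrixP => i j; rewrite !mxE derive_gal_space. Qed.

Lemma Sof_gal t x : Sof ug t x = Sof u t (x - alpha t).
Proof. by rewrite /Sof gradu_gal. Qed.

Lemma Omof_gal t x : Omof ug t x = Omof u t (x - alpha t).
Proof. by rewrite /Omof gradu_gal. Qed.

Hypothesis dalpha : forall t, differentiable alpha t.
Hypothesis da1 : forall t, derivable a1 t 1.
Hypothesis du : forall t x, differentiable (fun z : R * vec => u z.1 z.2) (t, x).

Lemma derive_gal_time t x i :
  'D_1 (fun r => ug r x i 0) t
  = 'D_1 (fun r => u r (x - alpha t) i 0) t
    - \sum_j a1 t j 0 * 'D_(evec R j) (fun y => u t y i 0) (x - alpha t)
    + derive1 a1 t i 0.
Proof.
pose F := fun z : R * vec => u z.1 z.2 i 0.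
have dF : differentiable F (t, x - alpha t).
  exact: (differentiable_entry i 0 (du t (x - alpha t))).
have dFa : differentiable (fun r => F (r, x - alpha r)) t.
  apply: (differentiable_comp _ dF); apply: differentiable_pair => //.
  by apply: differentiableB => //; apply: differentiable_cst.
have da1i : differentiable (fun r => a1 r i 0) t.
  by apply: differentiable_entry; apply/derivable1_diffP.
rewrite (_ : (fun r => _) = fun r => F (r, x - alpha r) + a1 r i 0); last first.
  by apply: funext => r; rewrite /= mxE.
have Da : 'D_1 alpha t = a1 t by rewrite derive1E.
have Da1 : 'D_1 (fun r => a1 r i 0) t = derive1 a1 t i 0.
  by rewrite derive1E (derive_mx (@da1 t)) mxE.
rewrite derive_addf // derive_moving_frame // Da Da1.
by rewrite (derive_evec_expand _ (differentiable_vel_space du t (x - alpha t) i)).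
Qed.

Hypothesis div0 : forall t x, \tr (gradu u t x) = 0.

Lemma convection_gal t x i :
  \sum_j 'D_(evec R j) (fun y => ug t y i 0 * ug t y j 0) x
  = \sum_j 'D_(evec R j) (fun y => u t y i 0 * u t y j 0) (x - alpha t)
    + \sum_j a1 t j 0 * 'D_(evec R j) (fun y => u t y i 0) (x - alpha t).
Proof.
set y0 := x - alpha t.
have dug k : differentiable (fun y => ug t y k 0) x.
  rewrite gal_vel_entry; apply: differentiableD; last exact: differentiable_cst.
  exact: (differentiable_translate (differentiable_vel_space du t y0 k)).
have tr0 : \sum_j 'D_(evec R j) (fun y => u t y j 0) y0 = 0.
  by rewrite -[RHS](@div0 t y0) /mxtrace; apply: eq_bigr => j _; rewrite mxE.
transitivity (\sum_j ('D_(evec R j) (fun y => u t y i 0 * u t y j 0) y0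
    + a1 t i 0 * 'D_(evec R j) (fun y => u t y j 0) y0
    + a1 t j 0 * 'D_(evec R j) (fun y => u t y i 0) y0)).
  apply: eq_bigr => j _.
  rewrite derive_mulf // !derive_gal_space derive_mulf //;
    try exact: differentiable_vel_space.
  by rewrite /= !mxE; ring.
by rewrite !big_split /= -mulr_sumr tr0 mulr0 addr0.
Qed.

Hypothesis dp : forall t x, differentiable (p t) x.

Lemma derive_gal_pres t x i :
  'D_(evec R i) (pg t) x = 'D_(evec R i) (p t) (x - alpha t) - rho * derive1 a1 t i 0.
Proof.
rewrite derive_subf; first last.
- by apply: differentiable_cmul; apply/differentiable_translate/differentiable_dotv.
- exact: differentiable_translate.
rewrite (derive_translate (p t)) derive_cmul; last first.
  exact/differentiable_translate/differentiable_dotv.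
by rewrite (derive_translate (dotv _)) derive_dotv dotv_evec.
Qed.

Lemma ns_residual_gal t x i : rho != 0 ->
  ns_residual nu rho tau ug pg t x i = ns_residual nu rho tau u p t (x - alpha t) i.
Proof.
move=> rho0; rewrite /ns_residual derive_gal_time convection_gal derive_gal_pres.
have SE : Sof ug t = fun y => Sof u t (y - alpha t).
  by apply: funext => y; rewrite Sof_gal.
have TE : (fun y => tau (Sof ug t y) (Omof ug t y))
          = fun y => tau (Sof u t (y - alpha t)) (Omof u t (y - alpha t)).
  by apply: funext => y; rewrite Sof_gal Omof_gal.
rewrite TE SE (divr_translate (Sof u t))
  (divr_translate (fun y => tau (Sof u t y) (Omof u t y))).
by rewrite mulrBr mulrA mulVf // mul1r; ring.
Qed.

End Galilean.

Section Invariance.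
Variable R : realType.
Notation vec := 'cV[R]_3.
Notation mat := 'M[R]_3.
Variables (nu rho : R).

Lemma act_conf_preserves (tau : mat -> mat -> mat) (M : mat) (s c : R) :
  M^T *m M = s%:M ->
  (forall S W, tau (M *m S *m M^T) (M *m W *m M^T) = M *m tau S W *m M^T) ->
  preserves nu rho tau (act_conf M s c).
Proof.
move=> MtM tau_conj u p [du [dgrad [dp [dtau [div0 eq0]]]]]; rewrite /act_conf /=.
have du_space t x k := differentiable_vel_space du (s * t + c) (M^T *m x) k.
have eq0' t x k : ns_residual nu rho tau u p t x k = 0 := eq0 t x k.
split; [|split; [|split; [|split; [|split]]]].
- move=> t x; rewrite /conf_vel.
  have dL : differentiable (fun z : R * vec => (s * z.1 + c, M^T *m z.2)) (t, x).
    apply: differentiable_pair; last exact/differentiable_mulmx/differentiable_snd.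
    apply: differentiableD; last exact: differentiable_cst.
    exact/differentiable_cmul/differentiable_fst.
  exact/differentiable_mulmx/(differentiable_comp dL (du _ _)).
- move=> t x i j; under eq_fun do rewrite gradu_conf //.
  exact: (differentiable_conj_entry (F := gradu u (s * t + c))).
- by move=> t x; apply/differentiable_cmul/differentiable_precomp.
- move=> t x i j; under eq_fun do rewrite tau_conf //.
  exact: (differentiable_conj_entry
            (F := fun y => tau (Sof u (s * t + c) y) (Omof u (s * t + c) y))).
- by move=> t x; rewrite gradu_conf // (mxtrace_conj MtM) div0 mulr0.
- move=> t x i.
  rewrite -[LHS]/(ns_residual nu rho tau (conf_vel M s c u) (conf_pres M s c p) t x i).
  by rewrite ns_residual_conf // big1 ?mulr0 // => k _; rewrite eq0' mulr0.
Qed.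

Lemma invariant_Gt_any (tau : mat -> mat -> mat) : invariant_Gt nu rho tau.
Proof.
move=> eps u p; rewrite (_ : act_time eps u p = act_conf 1%:M 1 (- eps) u p).
  apply: act_conf_preserves => [|S W]; first by rewrite trmx1 mulmx1.
  by rewrite trmx1 !mul1mx !mulmx1.
by congr pair; apply: funext => t; apply: funext => x;
  rewrite /conf_vel /conf_pres trmx1 !mul1mx !mul1r.
Qed.

Lemma model_invariant_SO3 a1 a2 a3 a4 a5 a6 a7 :
  invariant_SO3 nu rho (model a1 a2 a3 a4 a5 a6 a7).
Proof.
move=> Q QQt _ u p; have QtQ : Q^T *m Q = 1%:M := mulmx1C QQt.
rewrite (_ : act_rot Q u p = act_conf Q 1 0 u p).
  by apply: act_conf_preserves => // S W; exact: (model_conj QtQ ltr01).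
by congr pair; apply: funext => t; apply: funext => x;
  rewrite /conf_vel /conf_pres !mul1r addr0.
Qed.

Lemma model_invariant_Gs a1 a2 a3 a4 a5 a6 a7 :
  invariant_Gs nu rho (model a1 a2 a3 a4 a5 a6 a7).
Proof.
move=> eps u p; set k := expR (- eps).
have k2E : expR (- (2%:R * eps)) = k * k by rewrite -mulrN expRM_natl expr2.
have kMtM : (k%:M : mat)^T *m k%:M = (k * k)%:M by rewrite tr_scalar_mx -scalar_mxM.
rewrite (_ : act_scal eps u p = act_conf k%:M (k * k) 0 u p).
  apply: act_conf_preserves => // S W.
  by apply: (model_conj kMtM); rewrite mulr_gt0 ?expR_gt0.
by congr pair; apply: funext => t; apply: funext => x;
  rewrite /act_scal /conf_vel /conf_pres k2E tr_scalar_mx !mul_scalar_mx addr0.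
Qed.

Lemma invariant_Gp_any (tau : mat -> mat -> mat) : invariant_Gp nu rho tau.
Proof.
move=> xi _ u p [du [dgrad [dp [dtau [div0 eq0]]]]]; rewrite /act_press /=.
split=> //; split=> //; split=> [t x|].
  by apply: differentiableD => //; apply: differentiable_cst.
by split=> //; split=> // t x i; rewrite derive_addr_cst; apply: eq0.
Qed.

Lemma invariant_Gal_any (tau : mat -> mat -> mat) :
  rho != 0 -> invariant_Gal nu rho tau.
Proof.
move=> rho0 alpha [da [da1 _]] u p [du [dgrad [dp [dtau [div0 eq0]]]]].
have dalpha t : differentiable alpha t by apply/derivable1_diffP.
have da1' t : differentiable (derive1 alpha) t by apply/derivable1_diffP.
split; [|split; [|split; [|split; [|split]]]].
- move=> t x /=.
  have dL : differentiable (fun z : R * vec => (z.1, z.2 - alpha z.1)) (t, x).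
    apply: differentiable_pair; first exact: differentiable_fst.
    apply: differentiableB; first exact: differentiable_snd.
    by apply: differentiable_comp; [exact: differentiable_fst | exact: dalpha].
  apply: differentiableD; first exact: (differentiable_comp dL (du _ _)).
  by apply: differentiable_comp; [exact: differentiable_fst | exact: da1'].
- move=> t x i j; under eq_fun do rewrite gradu_gal.
  exact: (differentiable_translate (dgrad _ _ i j)).
- move=> t x; apply: differentiableB; first exact: differentiable_translate.
  by apply: differentiable_cmul; apply/differentiable_translate/differentiable_dotv.
- move=> t x i j; under eq_fun do rewrite Sof_gal Omof_gal.
  exact: (differentiable_translate (dtau _ _ i j)).
- by move=> t x; rewrite gradu_gal div0.
- move=> t x i; rewrite -[LHS]/(ns_residual nu rho tau (act_gal rho alpha u p).1
                                  (act_gal rho alpha u p).2 t x i).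
  by rewrite ns_residual_gal //; apply: eq0.
Qed.

End Invariance.

Theorem theorem2 (R : realType) (nu rho : R) (hnu : 0 < nu) (hrho : 0 < rho)
  (a1 a2 a3 a4 a5 a6 a7 : R -> R -> R -> R -> R -> R) :
  let tau := model a1 a2 a3 a4 a5 a6 a7 in
  [/\ invariant_Gt nu rho tau, invariant_Gal nu rho tau,
      invariant_SO3 nu rho tau, invariant_Gp nu rho tau
    & invariant_Gs nu rho tau].
Proof.
move=> tau; split.
- exact: invariant_Gt_any.
- by apply: invariant_Gal_any; rewrite gt_eqF.
- exact: model_invariant_SO3.
- exact: invariant_Gp_any.
- exact: model_invariant_Gs.
Qed.
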